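(* For $\beta,c,\beta',c'\in\mathbb{C}$, the formal deformations $(\langle\cdot,\cdot\rangle^{\beta,c}_n)_{n\ge0}$ and $(\langle\cdot,\cdot\rangle^{\beta',c'}_n)_{n\ge0}$ of $\mathcal K$ are modular-isomorphic if and only if $c=c'$ and either $\beta=\beta'=0$ or both $\beta\ne0$ and $\beta'\ne0$.
   Context: Let $\mathcal K=\mathbb{C}[E_4,E_6,A,A^{-1},B]$ be the localization at $A$ of the polynomial algebra $\mathbb{C}[E_4,E_6,A,B]$ in algebraically independent variables, bigraded by weight and index with $E_4$: $(4,0)$, $E_6$: $(6,0)$, $A$: $(-2,1)$, $B$: $(0,1)$; $\mathcal K_{k,p}$ are the homogeneous components. Set $F_2=BA^{-1}$. Let $\pi$ be the derivation with $\pi(f)=kF_2f$ for $f\in\mathcal K_{k,p}$, $S^\flat$ the derivation with $S^\flat(E_4)=-\frac13E_6$, $S^\flat(E_6)=-\frac12E_4^2$, $S^\flat(F_2)=0$, $S^\flat(A)=0$, and $\delta_\beta=S^\flat+\beta\pi$. For $f\in\mathcal K_{k,p}$, $g\in\mathcal K_{\ell,q}$: $\langle f,g\rangle^{\beta,c}_n=\sum_{i=0}^n(-1)^i\binom{k+cp+n-1}{n-i}\binom{\ell+cq+n-1}{i}\delta_\beta^i(f)\delta_\beta^{n-i}(g)$, extended bilinearly; these are formal deformations of $\mathcal K$. Two formal deformations $(\mu_n)_n$, $(\nu_n)_n$ of $\mathcal K$ are modular-isomorphic if there is a $\mathbb{C}$-linear bijection $\phi:\mathcal K\to\mathcal K$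 mapping each $\mathcal K_{k,p}$ into $\mathcal K_{k,p}$ with $\phi(\mu_n(f,g))=\nu_n(\phi(f),\phi(g))$ for all $n\ge0$, $f,g\in\mathcal K$. *)

From HB Require Import structures.
From mathcomp Require Import all_boot all_order all_algebra.
From Stdlib Require Import ClassicalEpsilon.
Set Implicit Arguments. Unset Strict Implicit. Unset Printing Implicit Defensive.
Import Order.TTheory GRing.Theory Num.Theory.
Local Open Scope ring_scope.

(* A monomial E4^a E6^b A^c B^d, encoded by its exponents (a, b, c, d),
   with c an integer since A is inverted. *)
Definition mono := (nat * nat * int * nat)%type.
Definition m_a (m : mono) : nat := m.1.1.1.
Definition m_b (m : mono) : nat := m.1.1.2.
Definition m_c (m : mono) : int := m.1.2.
Definition m_d (m : mono) : nat := m.2.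

(* bigrading: E4 : (4,0), E6 : (6,0), A : (-2,1), B : (0,1) *)
Definition mwt (m : mono) : int := (4 * m_a m + 6 * m_b m)%N%:Z - 2%:Z * m_c m.
Definition midx (m : mono) : int := m_c m + (m_d m)%:Z.

Definition madd (m m' : mono) : mono :=
  ((m_a m + m_a m')%N, (m_b m + m_b m')%N, m_c m + m_c m', (m_d m + m_d m')%N).

Section K.
Variable C : numClosedFieldType.

(* K = C[E4,E6,A,A^-1,B]: finitely supported coefficient functions on monomials *)
Record K := MkK {
  coef : mono -> C ;
  coef_fin : exists s : seq mono, forall m, coef m != 0 -> m \in s }.

Lemma Kzero_fin : exists s : seq mono, forall m : mono, (0 : C) != 0 -> m \in s.
Proof. by exists [::] => m; rewrite eqxx. Qed.
Definition Kzero : K := MkK Kzero_fin.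

Lemma Kadd_fin (f g : K) :
  exists s : seq mono, forall m, coef f m + coef g m != 0 -> m \in s.
Proof.
case: (coef_fin f) => s1 H1; case: (coef_fin g) => s2 H2.
exists (s1 ++ s2) => m; rewrite mem_cat.
case: (eqVneq (coef f m) 0) => [->|/H1 -> //]; rewrite add0r => /H2 ->.
by rewrite orbT.
Qed.
Definition Kadd (f g : K) : K := MkK (Kadd_fin f g).

Lemma Kscale_fin (a : C) (f : K) :
  exists s : seq mono, forall m, a * coef f m != 0 -> m \in s.
Proof.
case: (coef_fin f) => s H; exists s => m.
by case: (eqVneq (coef f m) 0) => [->|/H //]; rewrite mulr0 eqxx.
Qed.
Definition Kscale (a : C) (f : K) : K := MkK (Kscale_fin a f).

Lemma Kmono_fin (m0 : mono) :
  exists s : seq mono, forall m, ((m == m0)%:R : C) != 0 -> m \in s.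
Proof.
exists [:: m0] => m; rewrite inE; case: (m == m0) => //=.
by rewrite mulr0n eqxx.
Qed.
Definition Kmono (m0 : mono) : K := MkK (Kmono_fin m0).

Definition supp (f : K) : seq mono :=
  undup (proj1_sig (constructive_indefinite_description _ (coef_fin f))).

Definition lin (h : mono -> K) (f : K) : K :=
  foldr Kadd Kzero [seq Kscale (coef f m) (h m) | m <- supp f].

Definition Ksum (l : seq K) : K := foldr Kadd Kzero l.

Definition Kmul (f g : K) : K :=
  lin (fun m => lin (fun m' => Kmono (madd m m')) g) f.

Definition E4 : K := Kmono (1%N, 0%N, 0, 0%N).
Definition E6 : K := Kmono (0%N, 1%N, 0, 0%N).
Definition KA : K := Kmono (0%N, 0%N, 1, 0%N).
Definition KB : K := Kmono (0%N, 0%N, 0, 1%N).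
Definition KAinv : K := Kmono (0%N, 0%N, -1, 0%N).
Definition F2 : K := Kmul KB KAinv.

(* The derivation of K with prescribed values u4, u6, uA, uB on E4, E6, A, B
   (Leibniz rule on monomials, extended linearly). *)
Definition derK (u4 u6 uA uB : K) : K -> K :=
  lin (fun m =>
    Ksum [:: Kscale (m_a m)%:R (Kmul (Kmono ((m_a m).-1, m_b m, m_c m, m_d m)) u4);
             Kscale (m_b m)%:R (Kmul (Kmono (m_a m, (m_b m).-1, m_c m, m_d m)) u6);
             Kscale (m_c m)%:~R (Kmul (Kmono (m_a m, m_b m, m_c m - 1, m_d m)) uA);
             Kscale (m_d m)%:R (Kmul (Kmono (m_a m, m_b m, m_c m, (m_d m).-1)) uB)]).

(* S^flat: S(E4) = -E6/3, S(E6) = -E4^2/2, S(A) = 0, S(F2) = 0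
   (hence S(B) = S(F2 * A) = 0). *)
Definition Sflat : K -> K :=
  derK (Kscale (- 3^-1) E6) (Kscale (- 2^-1) (Kmul E4 E4)) Kzero Kzero.

Definition piK : K -> K :=
  lin (fun m => Kscale (mwt m)%:~R (Kmul F2 (Kmono m))).

Definition delta (beta : C) (f : K) : K := Kadd (Sflat f) (Kscale beta (piK f)).

Definition gbinom (x : C) (j : nat) : C :=
  (\prod_(i < j) (x - i%:R)) / (j`!)%:R.

(* <f,g>^{beta,c}_n on monomials (which are bihomogeneous), extended bilinearly *)
Definition bracket (beta c : C) (n : nat) (f g : K) : K :=
  lin (fun m1 => lin (fun m2 =>
    Ksum [seq Kscale ((-1) ^+ i
                      * gbinom ((mwt m1)%:~R + c * (midx m1)%:~R + n%:R - 1) (n - i)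
                      * gbinom ((mwt m2)%:~R + c * (midx m2)%:~R + n%:R - 1) i)
                (Kmul (iter i (delta beta) (Kmono m1))
                      (iter (n - i) (delta beta) (Kmono m2)))
         | i <- iota 0 n.+1]) g) f.

Definition homog (k p : int) (f : K) : Prop :=
  forall m, coef f m != 0 -> mwt m = k /\ midx m = p.

Definition modular_iso (mu nu : nat -> K -> K -> K) : Prop :=
  exists phi : K -> K,
    [/\ forall (a : C) (f g : K), phi (Kadd (Kscale a f) g) = Kadd (Kscale a (phi f)) (phi g),
        bijective phi,
        forall (k p : int) (f : K), homog k p f -> homog k p (phi f) &
        forall (n : nat) (f g : K), phi (mu n f g) = nu n (phi f) (phi g)].

End K.

From HB Require Import structures.
From mathcomp Require Import all_boot all_order all_algebra.
From mathcomp Require Import ring zify.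
From Stdlib Require Import FunctionalExtensionality ProofIrrelevance ClassicalEpsilon.
Set Implicit Arguments. Unset Strict Implicit. Unset Printing Implicit Defensive.
Import GRing.Theory Num.Theory.
Local Open Scope ring_scope.

(* Rescaling the coefficient of each monomial by t^(its B-degree) is a bigraded algebra
   automorphism; it commutes with S^flat and turns pi into t pi, since pi raises the
   B-degree by one, so it maps the deformation for (beta, c) to the one for (beta t, c).
   Conversely a modular isomorphism phi is multiplicative (n = 0) and preserves the lines
   spanned by F2 and B and the plane spanned by E4 and F2^2. Writing phi F2 = t F2,
   comparing phi <F2, F2>_2 = 12 beta^2 phi F2^4 with <phi F2, phi F2>_2 gives
   beta'^2 = beta^2 t^2, and the coefficient of B E6 in <B, E4>_1 gives c = c'. *)

Section Linear.
Variable C : numClosedFieldType.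
Local Notation KC := (K C).

Lemma K_ext (f g : KC) : (forall m, coef f m = coef g m) -> f = g.
Proof.
case: f g => [f Hf] [g Hg] /= H.
have E : f = g by apply: functional_extensionality.
subst g; congr MkK; apply: proof_irrelevance.
Qed.

Lemma coef_Kadd (f g : KC) m : coef (Kadd f g) m = coef f m + coef g m.
Proof. by []. Qed.

Lemma coef_Kscale a (f : KC) m : coef (Kscale a f) m = a * coef f m.
Proof. by []. Qed.

Lemma coef_Kmono m0 m : coef (Kmono C m0) m = (m == m0)%:R.
Proof. by []. Qed.

Lemma uniq_supp (f : KC) : uniq (supp f).
Proof. exact: undup_uniq. Qed.

Lemma mem_supp (f : KC) m : coef f m != 0 -> m \in supp f.
Proof.
rewrite /supp mem_undup; case: constructive_indefinite_description => s /= H.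
exact: H.
Qed.

Lemma big_uniq_cover_eq (s1 s2 : seq mono) (G : mono -> C) :
  uniq s1 -> uniq s2 -> (forall m, G m != 0 -> m \in s1) ->
  (forall m, G m != 0 -> m \in s2) ->
  \sum_(m <- s1) G m = \sum_(m <- s2) G m.
Proof.
move=> u1 u2 h1 h2.
have restrict (s s' : seq mono) : (forall m, G m != 0 -> m \in s') ->
    \sum_(m <- s) G m = \sum_(m <- s | m \in s') G m.
  move=> hs'; rewrite [RHS]big_mkcond /=; apply: eq_bigr => m _.
  by case: ifP => // /negbT ns; case: (eqVneq (G m) 0) => // /hs'; rewrite (negbTE ns).
rewrite (restrict s1 s2) // (restrict s2 s1) // -[LHS]big_filter -[RHS]big_filter.
apply: perm_big; apply: uniq_perm; rewrite ?filter_uniq // => m.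
by rewrite !mem_filter andbC.
Qed.

Lemma Ksum_coef (l : seq KC) m : coef (Ksum l) m = \sum_(x <- l) coef x m.
Proof. by elim: l => [|x l IH]; rewrite ?big_nil ?big_cons //= IH. Qed.

Lemma lin_coef (h : mono -> KC) f m' :
  coef (lin h f) m' = \sum_(m <- supp f) coef f m * coef (h m) m'.
Proof. by rewrite [lin h f]/lin -/(Ksum _) Ksum_coef big_map. Qed.

Lemma lin_coef_cover (h : mono -> KC) f m' (s : seq mono) :
  uniq s -> (forall m, coef f m != 0 -> m \in s) ->
  coef (lin h f) m' = \sum_(m <- s) coef f m * coef (h m) m'.
Proof.
move=> us hs; rewrite lin_coef; apply: big_uniq_cover_eq => // [|m|m].
- exact: uniq_supp.
- by case: (eqVneq (coef f m) 0) => [->|/mem_supp //]; rewrite mul0r eqxx.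
- by case: (eqVneq (coef f m) 0) => [->|/hs //]; rewrite mul0r eqxx.
Qed.

Lemma lin_Kmono (h : mono -> KC) m0 : lin h (Kmono C m0) = h m0.
Proof.
apply: K_ext => m'; rewrite (@lin_coef_cover _ _ _ [:: m0]) // ?big_seq1.
  by rewrite coef_Kmono eqxx mul1r.
by move=> m; rewrite coef_Kmono inE; case: (m == m0) => //=; rewrite mulr0n eqxx.
Qed.

Lemma linD h (f g : KC) : lin h (Kadd f g) = Kadd (lin h f) (lin h g).
Proof.
set s := undup (supp f ++ supp g).
have us : uniq s by exact: undup_uniq.
have sf m : coef f m != 0 -> m \in s by move=> H; rewrite mem_undup mem_cat mem_supp.
have sg m : coef g m != 0 -> m \in s.
  by move=> H; rewrite mem_undup mem_cat (mem_supp H) orbT.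
have sfg m : coef (Kadd f g) m != 0 -> m \in s.
  by rewrite coef_Kadd; case: (eqVneq (coef f m) 0) => [->|/sf //]; rewrite add0r; exact: sg.
apply: K_ext => m'; rewrite coef_Kadd (lin_coef_cover _ _ us sfg).
rewrite (lin_coef_cover _ _ us sf) (lin_coef_cover _ _ us sg) -big_split /=.
by apply: eq_bigr => m _; rewrite mulrDl.
Qed.

Lemma linZ h a (f : KC) : lin h (Kscale a f) = Kscale a (lin h f).
Proof.
have sf m : coef (Kscale a f) m != 0 -> m \in supp f.
  rewrite coef_Kscale.
  by case: (eqVneq (coef f m) 0) => [->|/mem_supp //]; rewrite mulr0 eqxx.
apply: K_ext => m'; rewrite (lin_coef_cover _ _ (uniq_supp f) sf) coef_Kscale lin_coef.
by rewrite mulr_sumr; apply: eq_bigr => m _; rewrite mulrA.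
Qed.

Lemma lin0 h : lin h (Kzero C) = Kzero C.
Proof.
by apply: K_ext => m'; rewrite (@lin_coef_cover _ _ _ [::]) ?big_nil // => m; rewrite eqxx.
Qed.

Lemma eq_lin (h1 h2 : mono -> KC) f : (forall m, h1 m = h2 m) -> lin h1 f = lin h2 f.
Proof. by move=> H; rewrite /lin; congr foldr; apply: eq_map => m; rewrite H. Qed.

Lemma lin_fD (h1 h2 : mono -> KC) f :
  lin (fun m => Kadd (h1 m) (h2 m)) f = Kadd (lin h1 f) (lin h2 f).
Proof.
apply: K_ext => m'; rewrite coef_Kadd !lin_coef -big_split /=.
by apply: eq_bigr => m _; rewrite mulrDr.
Qed.

Lemma lin_fZ (h : mono -> KC) a f :
  lin (fun m => Kscale a (h m)) f = Kscale a (lin h f).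
Proof.
apply: K_ext => m'; rewrite coef_Kscale !lin_coef mulr_sumr.
by apply: eq_bigr => m _; rewrite coef_Kscale mulrCA.
Qed.

Lemma lin_f0 f : lin (fun _ => Kzero C) f = Kzero C.
Proof. by apply: K_ext => m'; rewrite lin_coef big1 // => m _; rewrite mulr0. Qed.

Lemma Kmul_Kmono m1 m2 : Kmul (Kmono C m1) (Kmono C m2) = Kmono C (madd m1 m2).
Proof. by rewrite /Kmul !lin_Kmono. Qed.

Lemma KmulZl a (f h : KC) : Kmul (Kscale a f) h = Kscale a (Kmul f h).
Proof. exact: linZ. Qed.

Lemma KmulDr (f g h : KC) : Kmul f (Kadd g h) = Kadd (Kmul f g) (Kmul f h).
Proof. by rewrite /Kmul -lin_fD; apply: eq_lin => m; rewrite linD. Qed.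

Lemma KmulZr a (f h : KC) : Kmul f (Kscale a h) = Kscale a (Kmul f h).
Proof. by rewrite /Kmul -lin_fZ; apply: eq_lin => m; rewrite linZ. Qed.

Lemma Kmul0l (f : KC) : Kmul (Kzero C) f = Kzero C.
Proof. exact: lin0. Qed.

Lemma Kmul0r (f : KC) : Kmul f (Kzero C) = Kzero C.
Proof. by rewrite /Kmul -[RHS](lin_f0 f); apply: eq_lin => m; exact: lin0. Qed.

End Linear.

Section Bracket.
Variable C : numClosedFieldType.
Local Notation KC := (K C).

Lemma deltaZ b a (f : KC) : delta b (Kscale a f) = Kscale a (delta b f).
Proof. by rewrite /delta /Sflat /derK /piK !linZ; apply: K_ext => m /=; ring. Qed.

Lemma iter_deltaZ b a (f : KC) i :
  iter i (delta b) (Kscale a f) = Kscale a (iter i (delta b) f).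
Proof. by elim: i => //= i ->; exact: deltaZ. Qed.

Lemma bracket_Kmono (b c : C) n m1 m2 :
  bracket b c n (Kmono C m1) (Kmono C m2) =
    Ksum [seq Kscale ((-1) ^+ i
                      * gbinom ((mwt m1)%:~R + c * (midx m1)%:~R + n%:R - 1) (n - i)
                      * gbinom ((mwt m2)%:~R + c * (midx m2)%:~R + n%:R - 1) i)
                (Kmul (iter i (delta b) (Kmono C m1))
                      (iter (n - i) (delta b) (Kmono C m2)))
         | i <- iota 0 n.+1].
Proof. by rewrite /bracket !lin_Kmono. Qed.

Lemma bracketZl b c n a (f g : KC) :
  bracket b c n (Kscale a f) g = Kscale a (bracket b c n f g).
Proof. exact: linZ. Qed.

Lemma bracketDr b c n (f g1 g2 : KC) :
  bracket b c n f (Kadd g1 g2) = Kadd (bracket b c n f g1) (bracket b c n f g2).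
Proof. by rewrite /bracket -lin_fD; apply: eq_lin => m; exact: linD. Qed.

Lemma bracketZr b c n a (f g : KC) :
  bracket b c n f (Kscale a g) = Kscale a (bracket b c n f g).
Proof. by rewrite /bracket -lin_fZ; apply: eq_lin => m; exact: linZ. Qed.

Lemma gbinom0 (x : C) : gbinom x 0 = 1.
Proof. by rewrite /gbinom big_ord0 fact0 divr1. Qed.

Lemma gbinom1 (x : C) : gbinom x 1 = x.
Proof. by rewrite /gbinom big_ord1 subr0 divr1. Qed.

Lemma gbinom2 (x : C) : gbinom x 2 = x * (x - 1) / 2.
Proof. by rewrite /gbinom big_ord_recr big_ord1 /= subr0. Qed.

Lemma bracket0 b c (f g : KC) : bracket b c 0 f g = Kmul f g.
Proof.
rewrite /bracket /Kmul; apply: eq_lin => m1; apply: eq_lin => m2.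
by rewrite /= !gbinom0 !lin_Kmono; apply: K_ext => m /=; ring.
Qed.

End Bracket.

Section BScale.
Variables (C : numClosedFieldType) (t : C).
Local Notation KC := (K C).

Lemma Bscale_fin (f : KC) :
  exists s : seq mono, forall m, t ^+ m_d m * coef f m != 0 -> m \in s.
Proof.
case: (coef_fin f) => s H; exists s => m Hm; apply: H.
by case: (eqVneq (coef f m) 0) Hm => // ->; rewrite mulr0 eqxx.
Qed.

Definition Bscale (f : KC) : KC := MkK (Bscale_fin f).

Lemma coef_Bscale f m : coef (Bscale f) m = t ^+ m_d m * coef f m.
Proof. by []. Qed.

Lemma BscaleD (f g : KC) : Bscale (Kadd f g) = Kadd (Bscale f) (Bscale g).
Proof. by apply: K_ext => m /=; ring. Qed.

Lemma BscaleZ a (f : KC) : Bscale (Kscale a f) = Kscale a (Bscale f).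
Proof. by apply: K_ext => m /=; ring. Qed.

Lemma Bscale_Kmono m0 : Bscale (Kmono C m0) = Kscale (t ^+ m_d m0) (Kmono C m0).
Proof. by apply: K_ext => m /=; case: eqP => [->|]; rewrite ?mulr1 ?mulr0. Qed.

Lemma Bscale_homog k p (f : KC) : homog k p f -> homog k p (Bscale f).
Proof.
move=> H m; rewrite coef_Bscale => Hm; apply: H.
by case: (eqVneq (coef f m) 0) Hm => // ->; rewrite mulr0 eqxx.
Qed.

Lemma Bscale_lin h (f : KC) : Bscale (lin h f) = lin (fun m => Bscale (h m)) f.
Proof.
apply: K_ext => m'; rewrite coef_Bscale !lin_coef mulr_sumr.
by apply: eq_bigr => m _; rewrite coef_Bscale; ring.
Qed.

Lemma lin_Bscale h (f : KC) :
  lin h (Bscale f) = lin (fun m => Kscale (t ^+ m_d m) (h m)) f.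
Proof.
have sf m : coef (Bscale f) m != 0 -> m \in supp f.
  rewrite coef_Bscale.
  by case: (eqVneq (coef f m) 0) => [->|/mem_supp //]; rewrite mulr0 eqxx.
apply: K_ext => m'; rewrite (lin_coef_cover _ _ (uniq_supp f) sf) lin_coef.
by apply: eq_bigr => m _ /=; ring.
Qed.

Lemma Bscale_Kmul (f g : KC) : Bscale (Kmul f g) = Kmul (Bscale f) (Bscale g).
Proof.
rewrite /Kmul Bscale_lin lin_Bscale; apply: eq_lin => m.
rewrite Bscale_lin lin_Bscale -lin_fZ; apply: eq_lin => m'.
by rewrite Bscale_Kmono; apply: K_ext => m'' /=; rewrite exprD; ring.
Qed.

Lemma Bscale_Sflat (f : KC) : Bscale (Sflat f) = Sflat (Bscale f).
Proof.
rewrite /Sflat /derK Bscale_lin lin_Bscale; apply: eq_lin => m.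
rewrite !Kmul0r /E6 /E4 !KmulZr !Kmul_Kmono !BscaleD !BscaleZ !Bscale_Kmono.
by apply: K_ext => m' /=; rewrite !addn0; ring.
Qed.

Lemma Bscale_piK (f : KC) : Bscale (piK f) = Kscale t (piK (Bscale f)).
Proof.
rewrite /piK Bscale_lin lin_Bscale -lin_fZ; apply: eq_lin => m.
rewrite /F2 /KB /KAinv !Kmul_Kmono BscaleZ Bscale_Kmono.
by apply: K_ext => m' /=; rewrite addn0 add1n exprS; ring.
Qed.

Lemma Bscale_delta b (f : KC) : Bscale (delta b f) = delta (b * t) (Bscale f).
Proof.
by rewrite /delta BscaleD BscaleZ Bscale_Sflat Bscale_piK; apply: K_ext => m /=; ring.
Qed.

Lemma Bscale_iter_delta b i (f : KC) :
  Bscale (iter i (delta b) f) = iter i (delta (b * t)) (Bscale f).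
Proof. by elim: i => //= i <-; exact: Bscale_delta. Qed.

Lemma Bscale_bracket b c n (f g : KC) :
  Bscale (bracket b c n f g) = bracket (b * t) c n (Bscale f) (Bscale g).
Proof.
rewrite /bracket Bscale_lin lin_Bscale; apply: eq_lin => m1.
rewrite Bscale_lin lin_Bscale -lin_fZ; apply: eq_lin => m2.
apply: K_ext => m; rewrite !coef_Kscale coef_Bscale !Ksum_coef !big_map !mulr_sumr.
apply: eq_bigr => i _; rewrite -coef_Bscale BscaleZ Bscale_Kmul !Bscale_iter_delta.
rewrite !Bscale_Kmono !iter_deltaZ KmulZl KmulZr /=; ring.
Qed.

End BScale.

Lemma Bscale_bij (C : numClosedFieldType) (t : C) : t != 0 -> bijective (Bscale t).
Proof.
move=> t0; exists (Bscale t^-1) => f; apply: K_ext => m /=;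
  by rewrite exprVn mulrA ?mulVf ?mulfV ?expf_neq0 // mul1r.
Qed.

(* Exponents (E4, E6, A, B) of monomials; mF2k stands for F2^k. *)
Local Notation mE4 := ((1%N, 0%N, 0, 0%N) : mono).
Local Notation mE6 := ((0%N, 1%N, 0, 0%N) : mono).
Local Notation mB := ((0%N, 0%N, 0, 1%N) : mono).
Local Notation mF2 := ((0%N, 0%N, -1, 1%N) : mono).
Local Notation mF22 := ((0%N, 0%N, -2, 2%N) : mono).
Local Notation mF23 := ((0%N, 0%N, -3, 3%N) : mono).
Local Notation mF24 := ((0%N, 0%N, -4, 4%N) : mono).
Local Notation mF2E4 := ((1%N, 0%N, -1, 1%N) : mono).
Local Notation mF2E6 := ((0%N, 1%N, -1, 1%N) : mono).
Local Notation mBE6 := ((0%N, 1%N, 0, 1%N) : mono).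
Local Notation mF2BE4 := ((1%N, 0%N, -1, 2%N) : mono).
Local Notation mF23B := ((0%N, 0%N, -3, 4%N) : mono).

Ltac monomial_identity :=
  apply: K_ext => m'; rewrite /mwt /midx /m_a /m_b /m_c /m_d /=; by field.

Section MonomialBrackets.
Variable C : numClosedFieldType.
Local Notation KC := (K C).
Local Notation Km := (Kmono C).

Lemma delta_Kmono b m : delta b (Km m) =
  Kadd (Kadd
    (Kscale ((m_a m)%:R * - 3^-1) (Km (madd ((m_a m).-1, m_b m, m_c m, m_d m) mE6)))
    (Kscale ((m_b m)%:R * - 2^-1)
       (Km (madd (m_a m, (m_b m).-1, m_c m, m_d m) (madd mE4 mE4)))))
  (Kscale (b * (mwt m)%:~R) (Km (madd mF2 m))).
Proof.
rewrite /delta /Sflat /derK /piK !lin_Kmono !Kmul0r /E6 /E4 /F2 /KB /KAinv.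
by rewrite !KmulZr !Kmul_Kmono; apply: K_ext => m' /=; ring.
Qed.

Lemma delta_F2 b : delta b (Km mF2) = Kscale (2 * b) (Km mF22).
Proof. rewrite delta_Kmono; monomial_identity. Qed.

Lemma delta_F22 b : delta b (Km mF22) = Kscale (4 * b) (Km mF23).
Proof. rewrite delta_Kmono; monomial_identity. Qed.

Lemma delta_B b : delta b (Km mB) = Kzero C.
Proof. rewrite delta_Kmono; monomial_identity. Qed.

Lemma delta_E4 b :
  delta b (Km mE4) = Kadd (Kscale (- 3^-1) (Km mE6)) (Kscale (4 * b) (Km mF2E4)).
Proof. rewrite delta_Kmono; monomial_identity. Qed.

Ltac expand_bracket :=
  rewrite bracket_Kmono /= ?subn0 ?subnn ?gbinom0 ?gbinom1 ?gbinom2;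
  rewrite ?delta_F2 ?delta_F22 ?delta_B ?delta_E4 ?deltaZ ?delta_F22 ?Kmul0l;
  rewrite ?KmulDr ?KmulZl ?KmulZr !Kmul_Kmono; monomial_identity.

Lemma bracket2_F2F2 b c :
  bracket b c 2 (Km mF2) (Km mF2) = Kscale (12 * b ^+ 2) (Km mF24).
Proof. expand_bracket. Qed.

Lemma bracket1_F2E4 b c :
  bracket b c 1 (Km mF2) (Km mE4) = Kscale (- (2 / 3)) (Km mF2E6).
Proof. expand_bracket. Qed.

Lemma bracket1_F2F22 b c : bracket b c 1 (Km mF2) (Km mF22) = Kzero C.
Proof. expand_bracket. Qed.

Lemma bracket1_BE4 b c : bracket b c 1 (Km mB) (Km mE4) =
  Kadd (Kscale (- (c / 3)) (Km mBE6)) (Kscale (4 * c * b) (Km mF2BE4)).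
Proof. expand_bracket. Qed.

Lemma bracket1_BF22 b c :
  bracket b c 1 (Km mB) (Km mF22) = Kscale (4 * c * b) (Km mF23B).
Proof. expand_bracket. Qed.

End MonomialBrackets.

Lemma madd_inj m0 : injective (madd m0).
Proof.
case: m0 => [[[a0 b0] c0] d0] [[[a b] c] d] [[[a' b'] c'] d'].
by rewrite /madd /m_a /m_b /m_c /m_d /= => -[/addnI-> /addnI-> /addrI-> /addnI->].
Qed.

Lemma mono_wt2_idx0 m : mwt m = 2 -> midx m = 0 -> m = mF2.
Proof.
case: m => [[[a b] c] d]; rewrite /mwt /midx /m_a /m_b /m_c /m_d /= => h1 h2.
have [ha hb hd] : [/\ a = 0, b = 0 & d = 1]%N by split; lia.
have hc : c = -1 by lia.
by subst.
Qed.

Lemma mono_wt0_idx1 m : mwt m = 0 -> midx m = 1 -> m = mB.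
Proof.
case: m => [[[a b] c] d]; rewrite /mwt /midx /m_a /m_b /m_c /m_d /= => h1 h2.
have [ha hb hd] : [/\ a = 0, b = 0 & d = 1]%N by split; lia.
have hc : c = 0 by lia.
by subst.
Qed.

Lemma mono_wt4_idx0 m : mwt m = 4 -> midx m = 0 -> m = mE4 \/ m = mF22.
Proof.
case: m => [[[a b] c] d]; rewrite /mwt /midx /m_a /m_b /m_c /m_d /= => h1 h2.
have hb : b = 0%N by lia.
have [[ha hd]|[ha hd]] : (a = 1 /\ d = 0 \/ a = 0 /\ d = 2)%N by lia.
  have hc : c = 0 by lia.
  by left; subst.
have hc : c = -2 by lia.
by right; subst.
Qed.

Section Components.
Variable C : numClosedFieldType.
Local Notation KC := (K C).
Local Notation Km := (Kmono C).

Lemma coef_Kmul_Kmono m0 m (f : KC) : coef (Kmul (Km m0) f) (madd m0 m) = coef f m.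
Proof.
rewrite /Kmul lin_Kmono lin_coef.
under eq_bigr => i _ do rewrite coef_Kmono (inj_eq (@madd_inj m0)).
case: (boolP (m \in supp f)) => [sm|nsm].
  rewrite (bigD1_seq m) ?uniq_supp //= eqxx mulr1 big1 ?addr0 // => i.
  by rewrite eq_sym => /negbTE->; rewrite mulr0.
rewrite big1_seq; last by move=> i /andP[_ si]; case: eqP si nsm => [->->|]; rewrite ?mulr0.
by apply/esym/eqP; apply: contraNT nsm; exact: mem_supp.
Qed.

Lemma homog_Kmono m : homog (mwt m) (midx m) (Km m).
Proof.
by move=> m'; rewrite coef_Kmono; case: (eqVneq m' m) => [->|] //; rewrite mulr0n eqxx.
Qed.

Lemma homog_line k p (f : KC) m0 : homog k p f ->
  (forall m, mwt m = k -> midx m = p -> m = m0) -> f = Kscale (coef f m0) (Km m0).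
Proof.
move=> H U; apply: K_ext => m; rewrite coef_Kscale coef_Kmono.
case: (eqVneq m m0) => [->|ne]; first by rewrite mulr1.
rewrite mulr0; case: (eqVneq (coef f m) 0) => // /H [h1 h2].
by move: ne; rewrite (U _ h1 h2) eqxx.
Qed.

Lemma homog_plane k p (f : KC) m1 m2 : homog k p f -> m1 != m2 ->
  (forall m, mwt m = k -> midx m = p -> m = m1 \/ m = m2) ->
  f = Kadd (Kscale (coef f m1) (Km m1)) (Kscale (coef f m2) (Km m2)).
Proof.
move=> H n12 U; apply: K_ext => m; rewrite coef_Kadd !coef_Kscale !coef_Kmono.
case: (eqVneq m m1) => [->|ne1]; first by rewrite (negbTE n12) mulr1 mulr0 addr0.
case: (eqVneq m m2) => [->|ne2]; first by rewrite mulr1 mulr0 add0r.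
rewrite !mulr0 addr0; case: (eqVneq (coef f m) 0) => // /H [h1 h2].
by case: (U _ h1 h2) => E; [move: ne1 | move: ne2]; rewrite E eqxx.
Qed.

Lemma Kmono_neq0 m : Km m <> Kzero C.
Proof.
by move=> /(congr1 (fun f : KC => coef f m)) /=; rewrite eqxx => /eqP; rewrite oner_eq0.
Qed.

End Components.

Section ModularInvariants.
Variables (C : numClosedFieldType) (b c b' c' : C) (phi : K C -> K C).
Local Notation KC := (K C).
Local Notation Km := (Kmono C).
Hypothesis phi_linear :
  forall a f g, phi (Kadd (Kscale a f) g) = Kadd (Kscale a (phi f)) (phi g).
Hypothesis phi_inj : injective phi.
Hypothesis phi_homog : forall k p f, homog k p f -> homog k p (phi f).
Hypothesis phi_bracket :
  forall n f g, phi (bracket b c n f g) = bracket b' c' n (phi f) (phi g).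

Lemma phi0 : phi (Kzero C) = Kzero C.
Proof.
have := phi_linear (-1) (Kzero C) (Kzero C).
have -> : Kadd (Kscale (-1) (Kzero C)) (Kzero C) = Kzero C by apply: K_ext => m /=; ring.
by move=> E; apply: K_ext => m; rewrite {1}E /=; ring.
Qed.

Lemma phiZ a f : phi (Kscale a f) = Kscale a (phi f).
Proof.
have := phi_linear a f (Kzero C); rewrite phi0.
have -> : Kadd (Kscale a f) (Kzero C) = Kscale a f by apply: K_ext => m /=; ring.
by move=> ->; apply: K_ext => m /=; ring.
Qed.

Lemma phiD f g : phi (Kadd f g) = Kadd (phi f) (phi g).
Proof.
have := phi_linear 1 f g.
have -> : Kscale 1 f = f by apply: K_ext => m /=; ring.
by move=> ->; apply: K_ext => m /=; ring.
Qed.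

Lemma phiM f g : phi (Kmul f g) = Kmul (phi f) (phi g).
Proof. by rewrite -(bracket0 b c) phi_bracket bracket0. Qed.

Lemma phi_Kmono_line m : (forall m', mwt m' = mwt m -> midx m' = midx m -> m' = m) ->
  exists2 t, t != 0 & phi (Km m) = Kscale t (Km m).
Proof.
move=> U; have E := homog_line (phi_homog (@homog_Kmono C m)) U.
exists (coef (phi (Km m)) m) => //; apply/eqP => t0.
apply: (@Kmono_neq0 C m); apply: phi_inj; rewrite phi0 E t0.
by apply: K_ext => m' /=; ring.
Qed.

Lemma phi_E4_span : exists x y,
  phi (Km mE4) = Kadd (Kscale x (Km mE4)) (Kscale y (Km mF22)).
Proof.
do 2 eexists; apply: (homog_plane (phi_homog (@homog_Kmono C mE4))) => // m.
exact: mono_wt4_idx0.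
Qed.

Section GeneratorImages.
Variables t g x y : C.
Hypothesis t_neq0 : t != 0.
Hypothesis g_neq0 : g != 0.
Hypothesis phi_F2 : phi (Km mF2) = Kscale t (Km mF2).
Hypothesis phi_B : phi (Km mB) = Kscale g (Km mB).
Hypothesis phi_E4 : phi (Km mE4) = Kadd (Kscale x (Km mE4)) (Kscale y (Km mF22)).

Lemma phi_F22 : phi (Km mF22) = Kscale (t ^+ 2) (Km mF22).
Proof.
rewrite -[mF22]/(madd mF2 mF2) -Kmul_Kmono phiM phi_F2 KmulZl KmulZr Kmul_Kmono.
by apply: K_ext => m /=; ring.
Qed.

Lemma phi_F24 : phi (Km mF24) = Kscale (t ^+ 4) (Km mF24).
Proof.
rewrite -[mF24]/(madd mF22 mF22) -Kmul_Kmono phiM phi_F22 KmulZl KmulZr Kmul_Kmono.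
by apply: K_ext => m /=; ring.
Qed.

Lemma beta_sq : b' ^+ 2 = b ^+ 2 * t ^+ 2.
Proof.
have := phi_bracket 2 (Km mF2) (Km mF2).
rewrite bracket2_F2F2 phiZ phi_F24 phi_F2 bracketZl bracketZr bracket2_F2F2.
move=> /(congr1 (fun f : KC => coef f mF24)) /= E.
have h12t : 12 * t ^+ 2 != 0 by rewrite mulf_neq0 ?expf_neq0 // pnatr_eq0.
apply: (mulfI h12t); transitivity (t * (t * (12 * b' ^+ 2 * 1))); first by ring.
by rewrite -E; ring.
Qed.

Lemma beta_eq0_together : (b = 0 /\ b' = 0) \/ (b != 0 /\ b' != 0).
Proof.
have /eqP := beta_sq; case: (eqVneq b 0) => [b0|b_neq0].
  by rewrite b0 expr0n mul0r expf_eq0 /= => /eqP; left.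
case: (eqVneq b' 0) => [->|]; last by right.
by rewrite expr0n eq_sym mulf_eq0 !expf_eq0 /= (negbTE b_neq0) (negbTE t_neq0).
Qed.

Lemma phi_F2E6 : phi (Km mF2E6) = Kscale (t * x) (Km mF2E6).
Proof.
have := phi_bracket 1 (Km mF2) (Km mE4).
rewrite bracket1_F2E4 phiZ phi_F2 phi_E4 bracketZl bracketDr !bracketZr.
rewrite bracket1_F2E4 bracket1_F2F22 => E.
have h23 : - (2 / 3) != 0 :> C by rewrite oppr_eq0 mulf_neq0 ?invr_eq0 // pnatr_eq0.
apply: K_ext => m; apply: (mulfI h23).
by move: (congr1 (fun f : KC => coef f m) E) => /= ->; ring.
Qed.

Lemma x_neq0 : x != 0.
Proof.
apply/eqP => x0; apply: (@Kmono_neq0 C mF2E6); apply: phi_inj.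
by rewrite phi0 phi_F2E6 x0; apply: K_ext => m /=; ring.
Qed.

Lemma coef_phi_E6 : coef (phi (Km mE6)) mE6 = x.
Proof.
have := phi_F2E6; rewrite -[mF2E6]/(madd mF2 mE6) -Kmul_Kmono phiM phi_F2 KmulZl.
move=> /(congr1 (fun f : KC => coef f (madd mF2 mE6))).
rewrite !coef_Kscale !coef_Kmul_Kmono coef_Kmono eqxx mulr1 => E.
by apply: (mulfI t_neq0); rewrite E.
Qed.

(* The coefficient of B E6 in phi <B, E4>_1 = <phi B, phi E4>_1 is -c g x / 3 on the
   left and -c' g x / 3 on the right. *)
Lemma c_eq : c = c'.
Proof.
have phi_F2BE4 : phi (Km mF2BE4) =
    Kscale (t * g) (Kadd (Kscale x (Km mF2BE4)) (Kscale y (Km mF23B))).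
  rewrite -[mF2BE4]/(madd mF2 (madd mB mE4)) -!Kmul_Kmono !phiM phi_F2 phi_B phi_E4.
  rewrite !KmulZl !KmulZr !KmulDr !KmulZr !Kmul_Kmono.
  by apply: K_ext => m /=; ring.
have := phi_bracket 1 (Km mB) (Km mE4).
rewrite bracket1_BE4 phiD !phiZ phi_B phi_E4 bracketZl bracketDr !bracketZr.
rewrite bracket1_BE4 bracket1_BF22 phi_F2BE4.
rewrite -[mBE6]/(madd mB mE6) -Kmul_Kmono phiM phi_B KmulZl Kmul_Kmono.
move=> /(congr1 (fun f : KC => coef f (madd mB mE6))).
rewrite !coef_Kadd !coef_Kscale coef_Kmul_Kmono coef_phi_E6 /=.
move=> /eqP; rewrite -subr_eq0 => /eqP E.
have : g * x * (c' - c) = 0 by rewrite -[RHS](mulr0 3) -E; field.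
by move/eqP; rewrite !mulf_eq0 (negbTE g_neq0) (negbTE x_neq0) subr_eq0 => /eqP.
Qed.

End GeneratorImages.

Lemma modular_iso_invariants : c = c' /\ ((b = 0 /\ b' = 0) \/ (b != 0 /\ b' != 0)).
Proof.
have [t t_neq0 phi_F2] := phi_Kmono_line (m := mF2) mono_wt2_idx0.
have [g g_neq0 phi_B] := phi_Kmono_line (m := mB) mono_wt0_idx1.
have [x [y phi_E4]] := phi_E4_span.
split; first exact: (c_eq t_neq0 g_neq0 phi_F2 phi_B phi_E4).
exact: (beta_eq0_together t_neq0 phi_F2).
Qed.

End ModularInvariants.

Lemma Bscale_modular_iso (C : numClosedFieldType) (b c t : C) :
  t != 0 -> modular_iso (bracket b c) (bracket (b * t) c).
Proof.
move=> t_neq0; exists (Bscale t); split.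
- by move=> a f g; rewrite BscaleD BscaleZ.
- exact: Bscale_bij.
- by move=> k p f; exact: Bscale_homog.
- by move=> n f g; rewrite Bscale_bracket.
Qed.

Unset Implicit Arguments.

Theorem mainTheorem11 (C : numClosedFieldType) (beta c beta' c' : C) :
  modular_iso (bracket beta c) (bracket beta' c') <->
  c = c' /\ ((beta = 0 /\ beta' = 0) \/ (beta != 0 /\ beta' != 0)).
Proof.
split=> [[phi [phi_linear /bij_inj phi_inj phi_homog phi_bracket]]|[<- beta_cases]].
  exact: modular_iso_invariants phi_linear phi_inj phi_homog phi_bracket.
have [t t_neq0 <-] : exists2 t : C, t != 0 & beta * t = beta'.
  case: beta_cases => [[-> ->]|[beta_neq0 beta'_neq0]].
    by exists 1; rewrite ?oner_eq0 ?mul0r.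
  by exists (beta' / beta); rewrite ?mulf_neq0 ?invr_eq0 // mulrC divfK.
exact: Bscale_modular_iso.
Qed.
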